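(* For every $M\in\mathbb{R}^{n\times n}$ with block structure $0=n_0<n_1<\dots<n_m=n$, $$\|\mathcal{U}_b(M)\|_{S_\infty}\le(\lceil\log_2(m)\rceil+1)\|M\|_{S_\infty}.$$
   Context: Block $(i,j)$, $0\le i,j\le m-1$, consists of rows $n_i+1..n_{i+1}$ and columns $n_j+1..n_{j+1}$. $\mathcal{U}_b(M)$ has blocks $\mathcal{U}_b(M)(i,j)=M(i,j)$ for $i\le j$ and $0$ for $i>j$. $\|\cdot\|_{S_\infty}$ is the spectral norm. *)

From HB Require Import structures.
From mathcomp Require Import all_boot all_order all_algebra.
From mathcomp Require Import boolp classical_sets reals.
Set Implicit Arguments. Unset Strict Implicit. Unset Printing Implicit Defensive.
Import Order.TTheory GRing.Theory Num.Theory.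
Local Open Scope ring_scope.

Definition l2norm (R : realType) (q : nat) (x : 'cV[R]_q) : R :=
  Num.sqrt (\sum_(i < q) x i 0 ^+ 2).

(* Spectral norm (operator norm l2 -> l2 = largest singular value). *)
Definition specnorm (R : realType) (p q : nat) (M : 'M[R]_(p, q)) : R :=
  sup [set l2norm (M *m x) | x in [set x : 'cV[R]_q | l2norm x <= 1]]%classic.

(* 0-indexed row/column index i lies in block k, i.e. in rows n_k+1..n_{k+1}
   (1-indexed), given the block boundaries nb : nat -> nat. *)
Definition inblock (nb : nat -> nat) (k i : nat) : bool :=
  (nb k <= i < nb k.+1)%N.

Definition ublock (R : realType) (n m : nat) (nb : nat -> nat)
    (M : 'M[R]_n) : 'M[R]_n :=
  \matrix_(i < n, j < n)
    if [exists k : 'I_m, exists l : 'I_m,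
          [&& (k <= l)%N, inblock nb k i & inblock nb l j]]
    then M i j else 0.

From HB Require Import structures.
From mathcomp Require Import all_boot all_order all_algebra.
From mathcomp Require Import boolp classical_sets reals.
From mathcomp Require Import ring lra zify.
Set Implicit Arguments. Unset Strict Implicit. Unset Printing Implicit Defensive.
Import Order.TTheory GRing.Theory Num.Theory.
Local Open Scope ring_scope.

(* Give each index i a block number f i.  For a range [a, b) of block
   numbers let U_[a,b)(A) keep the entries A i j with a <= f i <= f j < b.
   Splitting [a, b) at a midpoint c gives
       U_[a,b)(A) = (U_[a,c)(A) + U_[c,b)(A)) + R,
   where R is the rectangle "rows in [a,c), columns in [c,b)" of A and the
   first summand is block diagonal.  A masked rectangle of A has norm at most
   ||A||, and a block-diagonal sum has norm at most the larger norm of its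
   two blocks; hence halving the range costs one extra ||A||, and induction
   on the length d of the range gives ||U_[a,a+d)(A)|| <= (ceil(log2 d)+1)||A||.
   The file first develops the Euclidean norm and the spectral norm (a
   supremum) through the predicate "A is bounded by c", then masks, then the
   divide-and-conquer bound, and finally identifies the U_b(M) of the theorem
   with U_[0,m)(M) for the block-number function of the partition nb. *)

Lemma cauchy_schwarz (R : realFieldType) (I : finType) (f g : I -> R) :
  (\sum_i f i * g i) ^+ 2 <= (\sum_i f i ^+ 2) * (\sum_i g i ^+ 2).
Proof.
have lagrange : \sum_i \sum_j (f i * g j - f j * g i) ^+ 2 =
   2 * ((\sum_i f i ^+ 2) * (\sum_i g i ^+ 2) - (\sum_i f i * g i) ^+ 2).
  have expand i j : (f i * g j - f j * g i) ^+ 2 =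
     f i ^+ 2 * g j ^+ 2 + g i ^+ 2 * f j ^+ 2 - 2 * (f i * g i) * (f j * g j).
    by ring.
  under eq_bigr => i _ do under eq_bigr => j _ do rewrite expand.
  under eq_bigr => i _ do rewrite sumrB big_split /= -!mulr_sumr.
  by rewrite sumrB big_split /= -!mulr_suml -mulr_sumr; ring.
have : 0 <= \sum_i \sum_j (f i * g j - f j * g i) ^+ 2.
  by apply: sumr_ge0 => i _; apply: sumr_ge0 => j _; apply: sqr_ge0.
by rewrite lagrange; lra.
Qed.

Section SpectralNorm.
Variables (R : realType) (n : nat).
Implicit Types (x y : 'cV[R]_n) (A B : 'M[R]_n) (c : R).

Definition sqnorm x : R := \sum_i x i 0 ^+ 2.

Lemma sqnorm_ge0 x : 0 <= sqnorm x.
Proof. by apply: sumr_ge0 => i _; apply: sqr_ge0. Qed.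

Lemma sqnorm_eq0 x : sqnorm x = 0 -> x = 0.
Proof.
move=> x0; apply/matrixP => i j; rewrite (ord1 j) mxE.
have /eqP := @psumr_eq0P _ _ predT _ (fun i _ => sqr_ge0 (x i 0)) x0 i isT.
by rewrite sqrf_eq0 => /eqP.
Qed.

Lemma l2norm_ge0 x : 0 <= l2norm x.
Proof. exact: sqrtr_ge0. Qed.

Lemma l2norm0 : l2norm (0 : 'cV[R]_n) = 0.
Proof. by rewrite /l2norm big1 ?sqrtr0 // => i _; rewrite mxE expr0n. Qed.

Lemma l2normZ c x : l2norm (c *: x) = `|c| * l2norm x.
Proof.
rewrite /l2norm -sqrtr_sqr -sqrtrM ?sqr_ge0 // mulr_sumr; congr Num.sqrt.
by apply: eq_bigr => i _; rewrite mxE; ring.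
Qed.

Lemma l2normD x y : l2norm (x + y) <= l2norm x + l2norm y.
Proof.
rewrite /l2norm; set a := \sum_i x i 0 ^+ 2; set b := \sum_i y i 0 ^+ 2.
have a0 : 0 <= a by exact: sqnorm_ge0.
have b0 : 0 <= b by exact: sqnorm_ge0.
have s0 : 0 <= Num.sqrt a + Num.sqrt b by apply: addr_ge0; apply: sqrtr_ge0.
rewrite -(ger0_norm s0) -sqrtr_sqr ler_sqrt ?sqr_ge0 //.
have -> : \sum_i (x + y) i 0 ^+ 2 = a + b + 2 * \sum_i x i 0 * y i 0.
  rewrite /a /b -big_split mulr_sumr -big_split /=.
  by apply: eq_bigr => i _; rewrite mxE; ring.
have cs : \sum_i x i 0 * y i 0 <= Num.sqrt a * Num.sqrt b.
  rewrite -sqrtrM // (le_trans (ler_norm _)) // -sqrtr_sqr ler_sqrt ?mulr_ge0 //.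
  exact: cauchy_schwarz.
by rewrite sqrrD !sqr_sqrtr //; lra.
Qed.

Definition op_bounded A c := forall x, l2norm (A *m x) <= c * l2norm x.

Lemma op_boundedP A c : 0 <= c ->
  op_bounded A c <-> forall x, sqnorm (A *m x) <= c ^+ 2 * sqnorm x.
Proof.
move=> c0; have sq x : (l2norm (A *m x) <= c * l2norm x) =
    (sqnorm (A *m x) <= c ^+ 2 * sqnorm x).
  rewrite /l2norm -[c in c * _](ger0_norm c0) -sqrtr_sqr -sqrtrM ?sqr_ge0 //.
  by rewrite ler_sqrt // mulr_ge0 ?sqr_ge0 ?sqnorm_ge0.
by split=> h x; [rewrite -sq | rewrite sq].
Qed.

Lemma op_bounded_le A c c' : c <= c' -> op_bounded A c -> op_bounded A c'.
Proof. by move=> le h x; rewrite (le_trans (h x)) // ler_wpM2r ?l2norm_ge0. Qed.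

Lemma op_boundedD A B c c' :
  op_bounded A c -> op_bounded B c' -> op_bounded (A + B) (c + c').
Proof.
move=> hA hB x; rewrite mulmxDl mulrDl.
by rewrite (le_trans (l2normD _ _)) // lerD.
Qed.

Lemma op_bounded_frobenius A : exists2 c, 0 <= c & op_bounded A c.
Proof.
have F0 : 0 <= \sum_i \sum_j A i j ^+ 2.
  by apply: sumr_ge0 => i _; apply: sumr_ge0 => j _; apply: sqr_ge0.
exists (Num.sqrt (\sum_i \sum_j A i j ^+ 2)); first exact: sqrtr_ge0.
apply/op_boundedP; first exact: sqrtr_ge0.
move=> x; rewrite sqr_sqrtr // /sqnorm mulr_suml; apply: ler_sum => i _.
by rewrite mxE; apply: cauchy_schwarz.
Qed.

Definition unit_image A : set R :=
  [set l2norm (A *m x) | x in [set x : 'cV[R]_n | l2norm x <= 1]]%classic.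

Lemma unit_image0 A : unit_image A 0.
Proof. by exists 0; rewrite /= ?mulmx0 l2norm0. Qed.

Lemma unit_image_has_sup A : has_sup (unit_image A).
Proof.
split; first by exists 0; exact: unit_image0.
have [c c0 hc] := op_bounded_frobenius A.
exists c => _ [x /= x1 <-]; apply: (le_trans (hc x)).
by rewrite -[leRHS]mulr1 ler_wpM2l.
Qed.

Lemma specnorm_ge0 A : 0 <= specnorm A.
Proof. exact: sup_upper_bound (unit_image_has_sup A) _ (unit_image0 A). Qed.

(* The spectral norm is a bound, by rescaling to a unit vector ... *)
Lemma specnorm_bounded A : op_bounded A (specnorm A).
Proof.
move=> x; have [/sqnorm_eq0 ->|x0] := eqVneq (sqnorm x) 0.
  by rewrite mulmx0 l2norm0 mulr0.
have t0 : 0 < l2norm x by rewrite sqrtr_gt0 lt_def x0 sqnorm_ge0.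
have ti0 : 0 <= (l2norm x)^-1 by rewrite invr_ge0 ltW.
have unit : l2norm ((l2norm x)^-1 *: x) <= 1.
  by rewrite l2normZ ger0_norm // mulVf ?gt_eqF.
have : unit_image A (l2norm (A *m ((l2norm x)^-1 *: x))) by exists ((l2norm x)^-1 *: x).
move/(sup_upper_bound (unit_image_has_sup A)).
by rewrite -scalemxAr l2normZ ger0_norm // ler_pdivrMl // mulrC.
Qed.

Lemma specnorm_le A c : 0 <= c -> op_bounded A c -> specnorm A <= c.
Proof.
move=> c0 hc; apply: ge_sup; first by exists 0; exact: unit_image0.
move=> _ [x /= x1 <-]; apply: (le_trans (hc x)).
by rewrite -[leRHS]mulr1 ler_wpM2l.
Qed.

End SpectralNorm.

Section Masks.
Variables (R : realType) (n : nat).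
Implicit Types (x : 'cV[R]_n) (A B : 'M[R]_n) (S T : pred 'I_n).

Definition mask (P : 'I_n -> 'I_n -> bool) A : 'M[R]_n :=
  \matrix_(i, j) if P i j then A i j else 0.

Definition proj S x : 'cV[R]_n := \col_i (if S i then x i 0 else 0).

Definition supported_in S T A := forall i j, ~~ (S i && T j) -> A i j = 0.

Lemma mask_supported S T (P : 'I_n -> 'I_n -> bool) A :
  (forall i j, P i j -> S i && T j) -> supported_in S T (mask P A).
Proof.
by move=> PST i j; rewrite mxE; case: (boolP (P i j)) => // /PST ->.
Qed.

Lemma sqnorm_proj S x : sqnorm (proj S x) + sqnorm (proj (predC S) x) = sqnorm x.
Proof.
rewrite /sqnorm -big_split; apply: eq_bigr => i _; rewrite !mxE /=.
by case: (S i); rewrite /= expr0n ?addr0 ?add0r.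
Qed.

Lemma l2norm_proj S x : l2norm (proj S x) <= l2norm x.
Proof.
rewrite ler_sqrt ?sqnorm_ge0 // -[leRHS](sqnorm_proj S x) lerDl; exact: sqnorm_ge0.
Qed.

Lemma mask_rectE S T A x :
  mask (fun i j => S i && T j) A *m x = proj S (A *m proj T x).
Proof.
apply/matrixP => i k; rewrite (ord1 k) !mxE.
case: (boolP (S i)) => Si /=.
  by apply: eq_bigr => j _; rewrite !mxE Si /=; case: (T j); rewrite ?mulr0 ?mul0r.
by rewrite big1 // => j _; rewrite !mxE (negbTE Si) mul0r.
Qed.

Lemma op_bounded_rect S T A :
  op_bounded (mask (fun i j => S i && T j) A) (specnorm A).
Proof.
move=> x; rewrite mask_rectE (le_trans (l2norm_proj _ _)) //.
rewrite (le_trans (specnorm_bounded _ _)) // ler_wpM2l ?specnorm_ge0 //.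
exact: l2norm_proj.
Qed.

Lemma supported_mulmx S T A x : supported_in S T A ->
  A *m x = A *m proj T x /\ forall i, ~~ S i -> (A *m x) i 0 = 0.
Proof.
move=> sA; split.
  apply/matrixP => i k; rewrite (ord1 k) !mxE; apply: eq_bigr => j _; rewrite mxE.
  have [//|nTj] := boolP (T j).
  by rewrite sA ?mul0r ?mulr0 // negb_and nTj orbT.
by move=> i Si; rewrite mxE big1 // => j _; rewrite sA ?mul0r // negb_and Si.
Qed.

Lemma op_bounded_blockdiag S T A B k : 0 <= k ->
  supported_in S T A -> supported_in (predC S) (predC T) B ->
  op_bounded A k -> op_bounded B k -> op_bounded (A + B) k.
Proof.
move=> k0 sA sB /(op_boundedP _ k0) hA /(op_boundedP _ k0) hB.
apply/op_boundedP => // x; rewrite mulmxDl.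
have [eA zA] := supported_mulmx x sA; have [eB zB] := supported_mulmx x sB.
have -> : sqnorm (A *m x + B *m x) = sqnorm (A *m x) + sqnorm (B *m x).
  rewrite /sqnorm -big_split; apply: eq_bigr => i _; rewrite mxE.
  case: (boolP (S i)) => Si; last by rewrite zA // expr0n /= !add0r.
  by rewrite (zB i) ?negbK // expr0n /= !addr0.
by rewrite eA eB -(sqnorm_proj T x) mulrDr lerD.
Qed.

End Masks.

Section BlockRanges.
Variables (R : realType) (n : nat) (f : 'I_n -> nat).
Implicit Types (A : 'M[R]_n) (a b c d : nat).

Definition urange a b A : 'M[R]_n :=
  mask (fun i j => [&& a <= f i, f i <= f j & f j < b]%N) A.

Lemma urange1 a A :
  urange a a.+1 A = mask (fun i j => (f i == a) && (f j == a)) A.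
Proof.
apply/matrixP => i j; rewrite !mxE; congr (if _ then _ else _).
by apply/idP/idP => [/and3P[]|/andP[/eqP-> /eqP->]]; lia.
Qed.

Lemma urange_split a c b A : (a <= c <= b)%N ->
  urange a b A = (urange a c A + urange c b A) +
    mask (fun i j => [&& a <= f i, f i < c, c <= f j & f j < b]%N) A.
Proof.
move=> /andP[ac cb]; apply/matrixP => i j; rewrite !mxE.
case: (leqP a (f i)) => h1; case: (leqP (f i) (f j)) => h2;
case: (ltnP (f j) b) => h3; case: (ltnP (f i) c) => h4; case: (ltnP (f j) c) => h5;
rewrite /= ?addr0 ?add0r //; exfalso; lia.
Qed.

Lemma op_bounded_urange_split a c b A k : 0 <= k -> (a <= c <= b)%N ->
  op_bounded (urange a c A) k -> op_bounded (urange c b A) k ->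
  op_bounded (urange a b A) (k + specnorm A).
Proof.
move=> k0 acb hl hr; rewrite (urange_split A acb); apply: op_boundedD.
  pose low : pred 'I_n := fun i => (f i < c)%N.
  apply: (@op_bounded_blockdiag _ _ low low) => //; apply: mask_supported.
    by move=> i j /and3P[_ ij jc]; rewrite /low jc (leq_ltn_trans ij jc).
  by move=> i j /and3P[ci ij _]; rewrite /= /low -!leqNgt ci (leq_trans ci ij).
have -> : mask (fun i j => [&& a <= f i, f i < c, c <= f j & f j < b]%N) A =
    mask (fun i j => ((a <= f i) && (f i < c)) && ((c <= f j) && (f j < b)))%N A.
  by apply/matrixP => i j; rewrite !mxE !andbA.
exact: op_bounded_rect.
Qed.

Lemma op_bounded_urange A d : (0 < d)%N -> forall a,
  op_bounded (urange a (a + d) A) ((up_log 2 d).+1%:R * specnorm A).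
Proof.
have A0 := specnorm_ge0 A.
elim/ltn_ind: d => -[//|[|d]] IH _ a.
  by rewrite addn1 urange1 up_log1 mul1r; apply: op_bounded_rect.
pose h := (d.+1./2.+1)%N.
have hpos : (0 < d.+2 - h)%N by rewrite /h; lia.
have hlt : (h < d.+2)%N by rewrite /h; lia.
have hle : (d.+2 - h <= h)%N by rewrite /h; lia.
have -> : (a + d.+2 = (a + h) + (d.+2 - h))%N by lia.
rewrite up_log2S // -/h -[(up_log 2 h).+2]addn1 natrD mulrDl mul1r.
apply: (op_bounded_urange_split (c := a + h)); first by rewrite mulr_ge0.
- by lia.
- exact: IH.
apply: op_bounded_le (IH _ _ hpos _); last by lia.
by rewrite ler_wpM2r // ler_nat ltnS leq_up_log.
Qed.

End BlockRanges.

Section BlockPartition.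
Variables (n m : nat) (nb : nat -> nat).
Hypotheses (nb0 : nb 0%N = 0%N) (nbm : nb m = n)
  (nb_incr : forall k, (k < m)%N -> (nb k < nb k.+1)%N).

Lemma nb_mono k l : (k <= l <= m)%N -> (nb k <= nb l)%N.
Proof.
move=> /andP[kl lm]; pose D := [pred k | k <= m]%N.
have convex : {in D &, forall i j k', i < k' < j -> k' \in D}%N.
  by move=> i j _ jm k' /andP[_ /ltnW kj]; rewrite inE (leq_trans kj jm).
have step : {in D, forall i, i.+1 \in D -> nb i <= nb i.+1}%N.
  by move=> i _; rewrite inE => im; apply/ltnW/nb_incr.
have kD : k \in D by rewrite inE (leq_trans kl lm).
exact: (homo_leq_in leqnn leq_trans convex step kD lm kl).
Qed.

Lemma inblock_exists b j : (b <= m)%N -> (j < nb b)%N ->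
  exists k : 'I_m, inblock nb k j.
Proof.
elim: b => [|b IHb] bm jb; first by rewrite nb0 in jb.
have [jb'|bj] := ltnP j (nb b); first exact: IHb (ltnW bm) jb'.
by exists (Ordinal bm); rewrite /inblock bj jb.
Qed.

Lemma inblock_unique (k l : 'I_m) j : inblock nb k j -> inblock nb l j -> k = l.
Proof.
have le_kl (k' l' : 'I_m) : inblock nb k' j -> inblock nb l' j -> (k' <= l')%N.
  move=> /andP[kj _] /andP[_ jl]; rewrite leqNgt; apply/negP => lk.
  have : (nb l'.+1 <= nb k')%N by apply: nb_mono; rewrite lk ltnW.
  by lia.
by move=> kj lj; apply/val_inj/eqP; rewrite eqn_leq !le_kl.
Qed.

Definition block_of (i : 'I_n) : nat :=
  if [pick k : 'I_m | inblock nb k i] is Some k then val k else 0%N.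

Lemma block_ofE (k : 'I_m) (i : 'I_n) : inblock nb k i -> block_of i = k.
Proof.
rewrite /block_of => ki; case: pickP => [k' k'i | /(_ k)].
  by rewrite (inblock_unique k'i ki).
by rewrite ki.
Qed.

Lemma block_of_spec (i : 'I_n) : inblock nb (block_of i) i /\ (block_of i < m)%N.
Proof.
have [k ki] : exists k : 'I_m, inblock nb k i.
  by apply: (@inblock_exists m) => //; rewrite nbm.
by rewrite (block_ofE ki).
Qed.

Lemma ublock_urange (R : realType) (M : 'M[R]_n) :
  ublock m nb M = urange block_of 0 m M.
Proof.
apply/matrixP => i j; rewrite !mxE; congr (if _ then _ else _).
apply/existsP/idP => [[k /existsP[l /and3P[kl ki lj]]]|/and3P[_ ij _]].
  by rewrite (block_ofE ki) (block_ofE lj) kl ltn_ord.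
have [ki km] := block_of_spec i; have [lj lm] := block_of_spec j.
exists (Ordinal km); apply/existsP; exists (Ordinal lm).
by rewrite ij ki lj.
Qed.

End BlockPartition.

Theorem mainTheorem11 (R : realType) (n m : nat) (nb : nat -> nat)
    (hm : (0 < m)%N) (h0 : nb 0%N = 0%N) (hn : nb m = n)
    (hinc : forall k, (k < m)%N -> (nb k < nb k.+1)%N)
    (M : 'M[R]_n) :
  specnorm (ublock m nb M) <= ((up_log 2 m).+1)%:R * specnorm M.
Proof.
rewrite (ublock_urange h0 hn hinc); apply: specnorm_le.
  by rewrite mulr_ge0 ?specnorm_ge0.
exact: (op_bounded_urange _ _ hm 0).
Qed.
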